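(* Let $(\Sigma_+,\Sigma_-,N_1,N_2,N_3)$ be a solution of the Wainwright–Hsu system satisfying the constraint, with $N_1<0$ and $N_2,N_3>0$. Then for every $\epsilon>0$ there is $T$ such that $\Sigma_+(\tau)\leq\frac12+\epsilon$ for all $\tau\geq T$.
   Context: Wainwright–Hsu system: for functions $N_1,N_2,N_3,\Sigma_+,\Sigma_-$ of $\tau\in\mathbb{R}$ (prime denotes $d/d\tau$), $N_1'=(q-4\Sigma_+)N_1$, $N_2'=(q+2\Sigma_++2\sqrt3\Sigma_-)N_2$, $N_3'=(q+2\Sigma_+-2\sqrt3\Sigma_-)N_3$, $\Sigma_+'=-(2-q)\Sigma_+-3S_+$, $\Sigma_-'=-(2-q)\Sigma_--3S_-$, where $q=2(\Sigma_+^2+\Sigma_-^2)$, $S_+=\frac12[(N_2-N_3)^2-N_1(2N_1-N_2-N_3)]$, $S_-=\frac{\sqrt3}{2}(N_3-N_2)(N_1-N_2-N_3)$, together with the constraint $\Sigma_+^2+\Sigma_-^2+\frac34[N_1^2+N_2^2+N_3^2-2(N_1N_2+N_2N_3+N_1N_3)]=1$. Solutions with these sign conditions exist for all $\tau\in\mathbb{R}$. *)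

From Stdlib Require Import Reals.
From Coquelicot Require Import Coquelicot.
Open Scope R_scope.

Definition qWH (Sp Sm : R) : R := 2 * (Sp ^ 2 + Sm ^ 2).

Definition SplusWH (N1 N2 N3 : R) : R :=
  / 2 * ((N2 - N3) ^ 2 - N1 * (2 * N1 - N2 - N3)).

Definition SminusWH (N1 N2 N3 : R) : R :=
  sqrt 3 / 2 * (N3 - N2) * (N1 - N2 - N3).

Definition WH_solution (N1 N2 N3 Sp Sm : R -> R) : Prop :=
  forall t : R,
    is_derive N1 t ((qWH (Sp t) (Sm t) - 4 * Sp t) * N1 t) /\
    is_derive N2 t ((qWH (Sp t) (Sm t) + 2 * Sp t + 2 * sqrt 3 * Sm t) * N2 t) /\
    is_derive N3 t ((qWH (Sp t) (Sm t) + 2 * Sp t - 2 * sqrt 3 * Sm t) * N3 t) /\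
    is_derive Sp t (- (2 - qWH (Sp t) (Sm t)) * Sp t - 3 * SplusWH (N1 t) (N2 t) (N3 t)) /\
    is_derive Sm t (- (2 - qWH (Sp t) (Sm t)) * Sm t - 3 * SminusWH (N1 t) (N2 t) (N3 t)) /\
    Sp t ^ 2 + Sm t ^ 2
      + 3 / 4 * (N1 t ^ 2 + N2 t ^ 2 + N3 t ^ 2
                 - 2 * (N1 t * N2 t + N2 t * N3 t + N1 t * N3 t)) = 1.

From Stdlib Require Import Reals Lra Psatz Classical.
From Coquelicot Require Import Coquelicot.
Open Scope R_scope.

(* [Nprod = - N1 N2 N3] satisfies [Nprod' = 3 q Nprod], so it is nondecreasing.
   Since [|Sp'|] is bounded, every visit of [Sp] above [1/2 + eps] is preceded by
   a window of fixed length on which [q >= 2 Sp^2 >= 1/2], multiplying [Nprod] by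
   a fixed factor; hence arbitrarily late visits make [Nprod] unbounded.  The
   constraint gives [N1^2 N2 N3 = - N1 Nprod <= 1/9], so then [N1 -> 0].  The
   same quantity grows like [exp (4 d t)] while [Sp > 1/2 + d], so [Sp] returns
   below [1/2 + eps/4] after any time; from such a late time on,
   [Sp + 3/(4 eps) N1^2] never climbs above [1/2 + eps], because
   [Sp' <= 3 N1^2] whenever [Sp >= 1/2]. *)

Lemma continuity_pt_of_derive (f : R -> R) (x l : R) :
  is_derive f x l -> continuity_pt f x.
Proof. intro Hd; apply derivable_continuous_pt; exists l; apply is_derive_Reals, Hd. Qed.

Lemma MVT_le (f df : R -> R) (a b K : R) :
  (forall t, is_derive f t (df t)) -> a <= b ->
  (forall t, a <= t <= b -> df t <= K) -> f b - f a <= K * (b - a).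
Proof.
  intros Hd Hab HK.
  destruct (MVT_gen f a b df) as (c & Hc & ->).
  - intros t _; apply Hd.
  - intros t _; exact (continuity_pt_of_derive _ _ _ (Hd t)).
  - rewrite Rmin_left, Rmax_right in Hc by lra.
    apply Rmult_le_compat_r; [lra | apply HK, Hc].
Qed.

Lemma MVT_ge (f df : R -> R) (a b K : R) :
  (forall t, is_derive f t (df t)) -> a <= b ->
  (forall t, a <= t <= b -> K <= df t) -> K * (b - a) <= f b - f a.
Proof.
  intros Hd Hab HK.
  assert (Hopp : forall t, is_derive (fun s => - f s) t (- df t))
    by (intro t; apply (is_derive_opp f), Hd).
  assert (H := MVT_le _ _ a b (- K) Hopp Hab).
  assert (- f b - - f a <= - K * (b - a)) by (apply H; intros t Ht; specialize (HK t Ht); lra).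
  lra.
Qed.

Lemma exp_growth_lower (f df : R -> R) (k a b : R) :
  (forall t, is_derive f t (df t)) -> a <= b ->
  (forall t, a <= t <= b -> k * f t <= df t) -> f a * exp (k * (b - a)) <= f b.
Proof.
  intros Hd Hab Hk.
  set (g t := f t * exp (- k * t)).
  assert (Hdg : forall t, is_derive g t ((df t - k * f t) * exp (- k * t))).
  { intro t.
    assert (He : is_derive (fun s => exp (- k * s)) t (- k * exp (- k * t)))
      by (auto_derive; [exact I | ring]).
    replace ((df t - k * f t) * exp (- k * t))
      with (df t * exp (- k * t) + f t * (- k * exp (- k * t))) by ring.
    exact (Derive.is_derive_mult _ _ _ _ _ (Hd t) He). }
  assert (Hgab : 0 * (b - a) <= g b - g a).
  { apply (MVT_ge g _ a b 0 Hdg Hab); intros t Ht.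
    specialize (Hk t Ht); assert (0 < exp (- k * t)) by apply exp_pos; nra. }
  unfold g in Hgab.
  assert (Hb : exp (- k * b) * exp (k * b) = 1)
    by (rewrite <- exp_plus, <- exp_0; f_equal; ring).
  assert (Ha : exp (k * (b - a)) = exp (- k * a) * exp (k * b))
    by (rewrite <- exp_plus; f_equal; ring).
  assert (0 < exp (k * b)) by apply exp_pos.
  rewrite Ha.
  replace (f b) with (f b * exp (- k * b) * exp (k * b)) by (rewrite Rmult_assoc, Hb; ring).
  rewrite <- Rmult_assoc; apply Rmult_le_compat_r; lra.
Qed.

Lemma sublevel_forward_invariant (g dg : R -> R) (c t0 : R) :
  (forall t, is_derive g t (dg t)) ->
  (forall t, t0 <= t -> c < g t -> dg t <= 0) ->
  g t0 <= c -> forall t1, t0 <= t1 -> g t1 <= c.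
Proof.
  intros Hd Hdown H0 t1 Ht1.
  apply Rnot_lt_le; intro Hc.
  set (E s := t0 <= s <= t1 /\ g s <= c).
  destruct (completeness E) as [s [Hub Hlub]].
  { exists t1; intros x [Hx _]; lra. }
  { exists t0; split; [lra | exact H0]. }
  assert (Hs0 : t0 <= s) by (apply Hub; split; [lra | exact H0]).
  assert (Hs1 : s <= t1) by (apply Hlub; intros x [Hx _]; lra).
  (* if g s > c, continuity would make some s - al/2 < s an upper bound of E *)
  assert (Hgs : g s <= c).
  { apply Rnot_lt_le; intro Hgt.
    destruct (continuity_pt_of_derive _ _ _ (Hd s) (g s - c)) as [al [Hal Hnear]]; [lra |].
    assert (Hup : is_upper_bound E (s - al / 2)).
    { intros x [Hx Hgx]; apply Rnot_lt_le; intro Hlt.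
      assert (Hxs : x <= s) by (apply Hub; split; assumption).
      destruct (Req_dec x s) as [-> | Hne]; [lra |].
      assert (Hdist : R_dist (g x) (g s) < g s - c).
      { apply Hnear; split; [split; [exact I | auto] |].
        simpl; unfold R_dist; rewrite Rabs_left1; lra. }
      unfold R_dist in Hdist; rewrite Rabs_left1 in Hdist; lra. }
    specialize (Hlub _ Hup); lra. }
  assert (Hlt : s < t1) by (destruct (Req_dec s t1); [subst; lra | lra]).
  destruct (MVT_cor2 g dg s t1 Hlt) as (x & Heq & Hx).
  { intros; apply is_derive_Reals, Hd. }
  assert (Hgx : c < g x).
  { apply Rnot_le_lt; intro Hle.
    assert (x <= s) by (apply Hub; split; [lra | exact Hle]); lra. }
  assert (dg x <= 0) by (apply Hdown; lra).
  assert (dg x * (t1 - s) <= 0) by (apply Rmult_le_0_r; lra).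
  lra.
Qed.

Lemma is_derive_mult_log (f g : R -> R) (x a b : R) :
  is_derive f x (a * f x) -> is_derive g x (b * g x) ->
  is_derive (fun t => f t * g t) x ((a + b) * (f x * g x)).
Proof.
  intros Hf Hg.
  replace ((a + b) * (f x * g x)) with (a * f x * g x + f x * (b * g x)) by ring.
  exact (Derive.is_derive_mult f g x _ _ Hf Hg).
Qed.

Definition WH_constraint (n1 n2 n3 sp sm : R) : R :=
  sp ^ 2 + sm ^ 2 + 3 / 4 * (n1 ^ 2 + n2 ^ 2 + n3 ^ 2 - 2 * (n1 * n2 + n2 * n3 + n1 * n3)).

Definition dSpWH (n1 n2 n3 sp sm : R) : R :=
  - (2 - qWH sp sm) * sp - 3 * SplusWH n1 n2 n3.

Lemma qWH_ge (sp sm : R) : 2 * sp ^ 2 <= qWH sp sm.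
Proof. unfold qWH; assert (0 <= sm ^ 2) by apply pow2_ge_0; lra. Qed.

Section ConstraintBounds.

Variables n1 n2 n3 sp sm : R.
Hypothesis n1_neg : n1 < 0.
Hypothesis n2_pos : 0 < n2.
Hypothesis n3_pos : 0 < n3.
Hypothesis constraint : WH_constraint n1 n2 n3 sp sm = 1.

Lemma constraint_split :
  sp ^ 2 + sm ^ 2 + 3 / 4 * (n1 ^ 2 + (n2 - n3) ^ 2 + 2 * (- n1 * (n2 + n3))) = 1.
Proof. rewrite <- constraint; unfold WH_constraint; ring. Qed.

Lemma n1_n23_nonneg : 0 <= - n1 * (n2 + n3).
Proof. apply Rmult_le_pos; lra. Qed.

Lemma Sigma_sq_le1 : sp ^ 2 + sm ^ 2 <= 1.
Proof.
  assert (H := constraint_split); assert (H' := n1_n23_nonneg).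
  assert (0 <= n1 ^ 2) by apply pow2_ge_0; assert (0 <= (n2 - n3) ^ 2) by apply pow2_ge_0.
  lra.
Qed.

Lemma qWH_le2 : qWH sp sm <= 2.
Proof. assert (H := Sigma_sq_le1); unfold qWH; lra. Qed.

Lemma n1_n23_le : - n1 * (n2 + n3) <= 2 / 3.
Proof.
  assert (H := constraint_split).
  assert (0 <= n1 ^ 2) by apply pow2_ge_0; assert (0 <= (n2 - n3) ^ 2) by apply pow2_ge_0.
  assert (0 <= sp ^ 2) by apply pow2_ge_0; assert (0 <= sm ^ 2) by apply pow2_ge_0.
  lra.
Qed.

Lemma n1_sq_le : n1 ^ 2 <= 4 / 3.
Proof.
  assert (H := constraint_split); assert (H' := n1_n23_nonneg).
  assert (0 <= (n2 - n3) ^ 2) by apply pow2_ge_0.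
  assert (0 <= sp ^ 2) by apply pow2_ge_0; assert (0 <= sm ^ 2) by apply pow2_ge_0.
  lra.
Qed.

(* By the constraint, the first summand is [- 2 (1 - Sp^2 - Sm^2) (1 + Sp)]. *)
Lemma dSpWH_on_constraint :
  dSpWH n1 n2 n3 sp sm =
  - 3 / 2 * (n1 ^ 2 + (n2 - n3) ^ 2 + 2 * (- n1 * (n2 + n3))) * (1 + sp)
  + 9 / 2 * (n1 ^ 2 + (- n1 * (n2 + n3))).
Proof.
  transitivity (- 3 / 2 * (n1 ^ 2 + (n2 - n3) ^ 2 + 2 * (- n1 * (n2 + n3))) * (1 + sp)
    + 9 / 2 * (n1 ^ 2 + (- n1 * (n2 + n3))) + 2 * sp * (WH_constraint n1 n2 n3 sp sm - 1)).
  - unfold dSpWH, qWH, SplusWH, WH_constraint; field.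
  - rewrite constraint; ring.
Qed.

Lemma sp_ge_m1 : -1 <= sp.
Proof. assert (H := Sigma_sq_le1); assert (0 <= sm ^ 2) by apply pow2_ge_0; nra. Qed.

Lemma dSpWH_le9 : dSpWH n1 n2 n3 sp sm <= 9.
Proof.
  rewrite dSpWH_on_constraint.
  assert (H1 := n1_n23_nonneg); assert (H2 := n1_n23_le); assert (H3 := n1_sq_le).
  assert (H4 := sp_ge_m1).
  assert (0 <= n1 ^ 2) by apply pow2_ge_0; assert (0 <= (n2 - n3) ^ 2) by apply pow2_ge_0.
  assert (0 <= (n1 ^ 2 + (n2 - n3) ^ 2 + 2 * (- n1 * (n2 + n3))) * (1 + sp))
    by (apply Rmult_le_pos; lra).
  lra.
Qed.

Lemma dSpWH_le_n1_sq : / 2 <= sp -> dSpWH n1 n2 n3 sp sm <= 3 * n1 ^ 2.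
Proof.
  intro Hsp; rewrite dSpWH_on_constraint.
  assert (H1 := n1_n23_nonneg).
  assert (0 <= n1 ^ 2) by apply pow2_ge_0; assert (0 <= (n2 - n3) ^ 2) by apply pow2_ge_0.
  assert (0 <= (n1 ^ 2 + (n2 - n3) ^ 2 + 2 * (- n1 * (n2 + n3))) * (sp - / 2))
    by (apply Rmult_le_pos; lra).
  lra.
Qed.

Lemma n1_sq_n2_n3_le : n1 ^ 2 * n2 * n3 <= / 9.
Proof.
  (* [4 n2 n3 <= (n2 + n3)^2] *)
  assert (H1 := n1_n23_nonneg); assert (H2 := n1_n23_le).
  assert (0 <= n1 ^ 2 * (n2 - n3) ^ 2)
    by (apply Rmult_le_pos; apply pow2_ge_0).
  assert ((- n1 * (n2 + n3)) * (- n1 * (n2 + n3)) <= 2 / 3 * (2 / 3))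
    by (apply Rmult_le_compat; lra).
  nra.
Qed.

End ConstraintBounds.

Section Solution.

Variables N1 N2 N3 Sp Sm : R -> R.
Hypothesis solution : WH_solution N1 N2 N3 Sp Sm.
Hypothesis N1_neg : forall t, N1 t < 0.
Hypothesis N2_pos : forall t, 0 < N2 t.
Hypothesis N3_pos : forall t, 0 < N3 t.

Definition Nprod (t : R) : R := - N1 t * N2 t * N3 t.

Definition N1_Nprod (t : R) : R := - N1 t * Nprod t.

Lemma constraint_at (t : R) : WH_constraint (N1 t) (N2 t) (N3 t) (Sp t) (Sm t) = 1.
Proof. apply solution. Qed.

Lemma derive_Sp (t : R) : is_derive Sp t (dSpWH (N1 t) (N2 t) (N3 t) (Sp t) (Sm t)).
Proof. apply solution. Qed.

Lemma derive_opp_N1 (t : R) :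
  is_derive (fun s => - N1 s) t ((qWH (Sp t) (Sm t) - 4 * Sp t) * - N1 t).
Proof.
  replace ((qWH (Sp t) (Sm t) - 4 * Sp t) * - N1 t)
    with (- ((qWH (Sp t) (Sm t) - 4 * Sp t) * N1 t)) by ring.
  apply (is_derive_opp N1), solution.
Qed.

Lemma Nprod_pos (t : R) : 0 < Nprod t.
Proof.
  assert (H1 := N1_neg t); assert (H2 := N2_pos t); assert (H3 := N3_pos t).
  unfold Nprod; repeat apply Rmult_lt_0_compat; lra.
Qed.

Lemma N1_Nprod_pos (t : R) : 0 < N1_Nprod t.
Proof. assert (H1 := N1_neg t); apply Rmult_lt_0_compat; [lra | apply Nprod_pos]. Qed.

Lemma derive_Nprod (t : R) : is_derive Nprod t (3 * qWH (Sp t) (Sm t) * Nprod t).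
Proof.
  destruct (solution t) as (_ & d2 & d3 & _).
  replace (3 * qWH (Sp t) (Sm t)) with
    (qWH (Sp t) (Sm t) - 4 * Sp t + (qWH (Sp t) (Sm t) + 2 * Sp t + 2 * sqrt 3 * Sm t)
     + (qWH (Sp t) (Sm t) + 2 * Sp t - 2 * sqrt 3 * Sm t)) by ring.
  apply (is_derive_mult_log (fun s => - N1 s * N2 s) N3); [| exact d3].
  exact (is_derive_mult_log _ _ _ _ _ (derive_opp_N1 t) d2).
Qed.

Lemma derive_N1_Nprod (t : R) :
  is_derive N1_Nprod t ((4 * qWH (Sp t) (Sm t) - 4 * Sp t) * N1_Nprod t).
Proof.
  replace (4 * qWH (Sp t) (Sm t) - 4 * Sp t)
    with (qWH (Sp t) (Sm t) - 4 * Sp t + 3 * qWH (Sp t) (Sm t)) by ring.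
  exact (is_derive_mult_log _ _ _ _ _ (derive_opp_N1 t) (derive_Nprod t)).
Qed.

Lemma N1_Nprod_le (t : R) : N1_Nprod t <= / 9.
Proof.
  replace (N1_Nprod t) with (N1 t ^ 2 * N2 t * N3 t) by (unfold N1_Nprod, Nprod; ring).
  exact (n1_sq_n2_n3_le _ _ _ (Sp t) (Sm t) (N1_neg t) (N2_pos t) (N3_pos t) (constraint_at t)).
Qed.

Lemma Nprod_nondecreasing (a b : R) : a <= b -> Nprod a <= Nprod b.
Proof.
  intro Hab.
  assert (H := MVT_ge _ _ a b 0 derive_Nprod Hab).
  enough (0 * (b - a) <= Nprod b - Nprod a) by lra.
  apply H; intros t _.
  assert (H1 := qWH_ge (Sp t) (Sm t)); assert (H2 := Nprod_pos t).
  assert (0 <= Sp t ^ 2) by apply pow2_ge_0; nra.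
Qed.

Lemma Nprod_window_growth (eps tau : R) : 0 < eps -> / 2 + eps < Sp tau ->
  (1 + 3 / 2 * (eps / 18)) * Nprod (tau - eps / 18) <= Nprod tau.
Proof.
  intros Heps Htau.
  set (h := eps / 18).
  assert (Hhalf : forall s, tau - h <= s <= tau -> / 2 <= Sp s).
  { intros s Hs.
    assert (Sp tau - Sp s <= 9 * (tau - s)).
    { apply (MVT_le _ _ s tau 9 derive_Sp); [lra |].
      intros t _; exact (dSpWH_le9 _ _ _ _ _ (N1_neg t) (N2_pos t) (N3_pos t) (constraint_at t)). }
    unfold h in Hs; lra. }
  assert (Hgrowth : Nprod (tau - h) * exp (3 / 2 * (tau - (tau - h))) <= Nprod tau).
  { apply (exp_growth_lower _ _ _ _ _ derive_Nprod); [unfold h; lra |].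
    intros t Ht.
    assert (H1 := Hhalf t Ht); assert (H2 := qWH_ge (Sp t) (Sm t)); assert (H3 := Nprod_pos t).
    assert (/ 2 <= qWH (Sp t) (Sm t)) by nra.
    nra. }
  replace (tau - (tau - h)) with h in Hgrowth by ring.
  assert (1 + 3 / 2 * h <= exp (3 / 2 * h)) by apply exp_ineq1_le.
  assert (Hpos := Nprod_pos (tau - h)); nra.
Qed.

Lemma Sp_eventually_le_of_Nprod_bounded (eps M : R) : 0 < eps ->
  (forall t, Nprod t <= M) -> exists T, forall tau, T <= tau -> Sp tau <= / 2 + eps.
Proof.
  intros Heps HM; apply NNPP; intro Hnot.
  assert (Hvisit : forall T, exists tau, T <= tau /\ / 2 + eps < Sp tau).
  { intro T; apply NNPP; intro Hno; apply Hnot; exists T; intros tau Htau.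
    apply Rnot_lt_le; intro Hlt; apply Hno; exists tau; split; assumption. }
  set (k := 3 / 2 * (eps / 18)).
  assert (Hk : 0 < k) by (unfold k; lra).
  assert (H0 := Nprod_pos 0).
  assert (Hiter : forall n : nat, exists tau, 0 <= tau /\ Nprod 0 * (1 + INR n * k) <= Nprod tau).
  { induction n as [| n [tn [Htn Hn]]].
    - exists 0; split; [lra | simpl; lra].
    - destruct (Hvisit (tn + eps / 18)) as [tau [Htau Hbig]].
      exists tau; split; [lra |].
      assert (Hw := Nprod_window_growth eps tau Heps Hbig); fold k in Hw.
      assert (Nprod tn <= Nprod (tau - eps / 18)) by (apply Nprod_nondecreasing; lra).
      assert (Nprod 0 <= Nprod tn) by (apply Nprod_nondecreasing; lra).
      rewrite S_INR; nra. }
  destruct (INR_unbounded (M / (k * Nprod 0))) as [n Hn].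
  destruct (Hiter n) as [tau [_ Htau]].
  assert (M < INR n * (k * Nprod 0)).
  { apply (Rmult_lt_compat_r (k * Nprod 0)) in Hn; [| nra].
    unfold Rdiv in Hn; rewrite Rmult_assoc, Rinv_l in Hn by nra; lra. }
  specialize (HM tau); nra.
Qed.

Lemma Sp_returns (d T : R) : 0 < d -> exists t, T <= t /\ Sp t <= / 2 + d.
Proof.
  intro Hd; apply NNPP; intro Hnot.
  assert (Habove : forall t, T <= t -> / 2 + d < Sp t).
  { intros t Ht; apply Rnot_le_lt; intro Hle; apply Hnot; exists t; split; assumption. }
  assert (HP := N1_Nprod_pos T).
  set (L := / (36 * d * N1_Nprod T)).
  assert (HL : 0 < L) by (unfold L; apply Rinv_0_lt_compat; nra).
  assert (Hgrowth : N1_Nprod T * exp (4 * d * (T + L - T)) <= N1_Nprod (T + L)).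
  { apply (exp_growth_lower _ _ _ _ _ derive_N1_Nprod); [lra |].
    intros t Ht.
    assert (H1 := Habove t ltac:(lra)); assert (H2 := qWH_ge (Sp t) (Sm t)).
    assert (H3 := N1_Nprod_pos t).
    assert (4 * d <= 4 * qWH (Sp t) (Sm t) - 4 * Sp t) by nra.
    nra. }
  replace (T + L - T) with L in Hgrowth by ring.
  assert (1 + 4 * d * L <= exp (4 * d * L)) by apply exp_ineq1_le.
  assert (N1_Nprod T * (4 * d * L) = / 9) by (unfold L; field; lra).
  assert (Hbound := N1_Nprod_le (T + L)); nra.
Qed.

Lemma opp_N1_le_of_Nprod_ge (m T0 : R) : 0 < m -> m <= Nprod T0 ->
  forall t, T0 <= t -> - N1 t <= / (9 * m).
Proof.
  intros Hm HmT t Ht.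
  assert (Hmt : m <= Nprod t)
    by (apply Rle_trans with (Nprod T0); [| apply Nprod_nondecreasing]; assumption).
  assert (H1 := N1_Nprod_le t); assert (H2 := N1_neg t).
  apply (Rmult_le_reg_r (9 * m)); [lra |].
  rewrite Rinv_l by lra; unfold N1_Nprod in H1; nra.
Qed.

Lemma Sp_trapped (eps t0 : R) : 0 < eps ->
  (forall t, t0 <= t -> - N1 t <= eps / 2) -> Sp t0 <= / 2 + eps / 4 ->
  forall t, t0 <= t -> Sp t <= / 2 + eps.
Proof.
  intros Heps Hsmall Hstart.
  (* With [c * 4 eps = 3], the decay of [c N1^2] above level [1/2 + eps]
     compensates [Sp' <= 3 N1^2]. *)
  set (c := 3 / (4 * eps)).
  assert (Hc : 0 < c) by (unfold c; apply Rdiv_lt_0_compat; lra).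
  assert (Hceps : c * eps = 3 / 4) by (unfold c; field; lra).
  set (F t := Sp t + c * (N1 t * N1 t)).
  assert (HcN1 : forall t, t0 <= t -> 0 <= c * (N1 t * N1 t) <= 3 / 16 * eps).
  { intros t Ht; assert (H1 := Hsmall t Ht); assert (H2 := N1_neg t).
    assert (N1 t * N1 t <= eps / 2 * (eps / 2)) by nra.
    split; [apply Rmult_le_pos; nra | nra]. }
  assert (dF : forall t, is_derive F t
    (dSpWH (N1 t) (N2 t) (N3 t) (Sp t) (Sm t)
     + c * ((qWH (Sp t) (Sm t) - 4 * Sp t + (qWH (Sp t) (Sm t) - 4 * Sp t)) * (N1 t * N1 t)))).
  { intro t; destruct (solution t) as (d1 & _).
    apply (is_derive_plus Sp); [apply derive_Sp |].
    apply is_derive_scal, is_derive_mult_log; exact d1. }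
  intros t1 Ht1.
  enough (HF : F t1 <= / 2 + eps) by (assert (H1 := HcN1 t1 Ht1); unfold F in HF; lra).
  apply (sublevel_forward_invariant F _ _ t0 dF); [| | exact Ht1].
  - intros t Ht HFt.
    assert (H1 := HcN1 t Ht); unfold F in HFt.
    assert (Hsp : / 2 <= Sp t) by lra.
    assert (H2 := dSpWH_le_n1_sq _ _ _ _ _ (N1_neg t) (N2_pos t) (N3_pos t) (constraint_at t) Hsp).
    assert (H3 := qWH_le2 _ _ _ _ _ (N1_neg t) (N2_pos t) (N3_pos t) (constraint_at t)).
    assert (H4 : 0 <= N1 t * N1 t) by nra.
    assert (c * ((qWH (Sp t) (Sm t) - 4 * Sp t + (qWH (Sp t) (Sm t) - 4 * Sp t)) * (N1 t * N1 t))
            <= c * (- 4 * eps * (N1 t * N1 t))) by (apply Rmult_le_compat_l; nra).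
    replace (N1 t ^ 2) with (N1 t * N1 t) in H2 by ring.
    nra.
  - assert (H1 := HcN1 t0 (Rle_refl t0)); unfold F; lra.
Qed.

End Solution.

Theorem mainTheorem14 (N1 N2 N3 Sp Sm : R -> R) :
  WH_solution N1 N2 N3 Sp Sm ->
  (forall t, N1 t < 0) -> (forall t, 0 < N2 t) -> (forall t, 0 < N3 t) ->
  forall eps : R, 0 < eps ->
  exists T : R, forall tau : R, T <= tau -> Sp tau <= / 2 + eps.
Proof.
  intros sol HN1 HN2 HN3 eps Heps.
  destruct (classic (exists M, forall t, Nprod N1 N2 N3 t <= M)) as [[M HM] | Hunbounded].
  - exact (Sp_eventually_le_of_Nprod_bounded _ _ _ _ _ sol HN1 HN2 HN3 eps M Heps HM).
  - destruct (not_all_ex_not _ _ (not_ex_all_not _ _ Hunbounded (2 / (9 * eps))))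
      as [T0 HT0].
    assert (HN1small : forall t, T0 <= t -> - N1 t <= eps / 2).
    { intros t Ht.
      replace (eps / 2) with (/ (9 * (2 / (9 * eps)))) by (field; lra).
      apply (opp_N1_le_of_Nprod_ge _ _ _ _ _ sol HN1 HN2 HN3 _ T0);
        [apply Rdiv_lt_0_compat; lra | lra | exact Ht]. }
    destruct (Sp_returns _ _ _ _ _ sol HN1 HN2 HN3 (eps / 4) T0) as [t0 [Ht0 Hreturn]]; [lra |].
    exists t0.
    apply (Sp_trapped _ _ _ _ _ sol HN1 HN2 HN3 eps t0 Heps); [| exact Hreturn].
    intros t Ht; apply HN1small; lra.
Qed.
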